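(* Let $g_{ij}(\eta)$ be $\mathcal G_{i,j-1}$-measurable random variables ($i,j\ge1$). Then, whenever all the integrals exist, $$E_\eta[g_{ij}(\eta)Z_{ij}(\theta)I_{ij}^{cen}\mid\mathcal G_{i,j-1}]=-E_\eta[g_{ij}(\eta)Z_{ij}(\theta)I_{ij}^{obs}\mid\mathcal G_{i,j-1}],$$ $$E_\eta[g_{ij}(\eta)(Z_{ij}^2(\theta)-\sigma^2)I_{ij}^{cen}\mid\mathcal G_{i,j-1}]=-E_\eta[g_{ij}(\eta)(Z_{ij}^2(\theta)-\sigma^2)I_{ij}^{obs}\mid\mathcal G_{i,j-1}].$$
   Context: Probability measures $P_\eta$, $\eta=(\theta^T,\sigma^2)^T\in K\subset\mathbb R^{p+1}$, on a measurable space; $E_\eta$ is expectation under $P_\eta$. For each subject $i\ge1$: event times $0=S_{i0}<S_{i1}<\cdots$, censoring time $0<C_i<\infty$, random covariates $x_{ij}$. $\mathcal F_{ij}=\sigma\{S_{il}\ (0\le l\le j);x_{il}\ (1\le l\le j+1)\}$, $\mathcal G_{ij}=\sigma\{\mathcal F_{ij},\{S_{ik}\le C_i\},\{S_{ik}=C_i\}\ (1\le k\le j)\}$ for $j\ge1$, $\mathcal G_{i0}=\mathcal F_{i0}$. Gap times $Y_{ij}=S_{ij}-S_{i,j-1}$ have finite second moments and satisfy $E_\theta[Y_{ij}\mid\mathcal F_{i,j-1}]=\mu_{ij}(\theta)$, $\mathrm{var}_\eta[Y_{ij}\mid\mathcal F_{i,j-1}]=\sigma^2V_{ij}^2(\theta)$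 with known $\mu_{ij}(\theta)$, $V_{ij}(\theta)>0$ that are $\mathcal F_{i,j-1}$-measurable. Standing assumption (A): $E_\theta[Y_{ij}\mid\mathcal G_{i,j-1}]=E_\theta[Y_{ij}\mid\mathcal F_{i,j-1}]$ and $\mathrm{var}_\eta[Y_{ij}\mid\mathcal G_{i,j-1}]=\mathrm{var}_\eta[Y_{ij}\mid\mathcal F_{i,j-1}]$. $Z_{ij}(\theta)=(Y_{ij}-\mu_{ij}(\theta))/V_{ij}(\theta)$. Indicators: $I_{ij}^{obs}=I\{S_{ij}\le C_i\}$, $I_{ij}^{cen}=I\{S_{i,j-1}<C_i<S_{ij}\}$. *)

From HB Require Import structures.
From mathcomp Require Import all_boot all_order all_algebra.
From mathcomp Require Import all_classical all_reals all_analysis.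
Set Implicit Arguments.
Unset Strict Implicit.
Unset Printing Implicit Defensive.
Import Order.TTheory GRing.Theory Num.Theory.
Local Open Scope classical_set_scope.
Local Open Scope ring_scope.

Section defs.
Context {d : measure_display} {T : measurableType d} {R : realType}.

Definition measurable_wrt (G : set (set T)) (f : T -> R) : Prop :=
  forall B : set R, measurable B -> G (f @^-1` B).

Definition is_condexp (P : probability T R) (G : set (set T)) (X Y : T -> R)
  : Prop :=
  [/\ P.-integrable setT (EFin \o X),
      P.-integrable setT (EFin \o Y),
      measurable_wrt G Y &
      forall A, G A ->
        (\int[P]_(w in A) (Y w)%:E = \int[P]_(w in A) (X w)%:E)%E].

Definition is_condvar (P : probability T R) (G : set (set T)) (X v : T -> R)
  : Prop :=
  exists m, is_condexp P G X m /\
            is_condexp P G (fun w => (X w - m w) ^+ 2) v.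

Context {dX : measure_display} {X : measurableType dX}.

Definition Fsig (S : nat -> nat -> T -> R) (x : nat -> nat -> T -> X)
  (i j : nat) : set (set T) :=
  <<s [set A | (exists l, (l <= j)%N /\
                   exists B : set R, measurable B /\ A = S i l @^-1` B)
            \/ (exists l, (1 <= l <= j.+1)%N /\
                   exists B : set X, measurable B /\ A = x i l @^-1` B)] >>.

Definition Gsig (S : nat -> nat -> T -> R) (C : nat -> T -> R)
  (x : nat -> nat -> T -> X) (i j : nat) : set (set T) :=
  <<s [set A | Fsig S x i j A \/
         exists k, (1 <= k <= j)%N /\
           (A = [set w | S i k w <= C i w] \/ A = [set w | S i k w = C i w])] >>.

End defs.

Section indicators.
Context {T : Type} {R : realType}.
Definition Iobs (S : nat -> nat -> T -> R) (C : nat -> T -> R) (i j : nat)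
  (w : T) : R := ((S i j w <= C i w)%R : bool)%:R.
Definition Icen (S : nat -> nat -> T -> R) (C : nat -> T -> R) (i j : nat)
  (w : T) : R := ((S i j.-1 w < C i w)%R && (C i w < S i j w)%R)%:R.
End indicators.

From mathcomp Require Import all_boot all_order all_algebra.
From mathcomp Require Import all_classical all_reals all_analysis.
From mathcomp Require Import measurable_realfun ring.

(* Since S_{i,j-1} < S_ij, I^cen_ij + I^obs_ij is the indicator of
   {S_{i,j-1} < C_i}, an event of G := G_{i,j-1}.  Both identities therefore
   say that E[h f | G] = 0 for a G-measurable h (g_ij times that indicator,
   divided by V_ij resp. V_ij^2) and an f whose conditional expectation given G
   vanishes by assumption (A): f = Y_ij - mu_ij, resp.
   f = (Y_ij - mu_ij)^2 - sigma^2 V_ij^2, the conditional mean occurring in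
   the conditional variance being a.s. equal to mu_ij.
   No integrability of h is available, so "taking out what is known" is
   proved by slicing: if W is a version of E[h f | G], then on each G-set
   {W > 0, k dl <= h < (k+1) dl} we have \int W = \int (h - k dl) f
   <= dl \int |f|; summing over k gives \int_{W > 0} W <= dl E|f| for every
   dl > 0, so W <= 0 a.s., and symmetrically W >= 0 a.s. *)

Set Implicit Arguments.
Unset Strict Implicit.
Unset Printing Implicit Defensive.

Import Order.TTheory GRing.Theory Num.Theory.
Local Open Scope classical_set_scope.
Local Open Scope ring_scope.

Lemma measurable_funV {d : measure_display} {T : measurableType d}
  {R : realType} (D : set T) (f : T -> R) :
  measurable_fun D f -> measurable_fun D (fun x => (f x)^-1).
Proof.
move=> mf; apply: measurableT_comp mf.
rewrite -(setUv [set 0%R]) measurable_funU//; last exact/measurableC.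
split; first exact: measurable_fun_set1.
apply: open_continuous_measurable_fun; first exact/closed_openC/closed_eq.
by move=> x /set_mem/eqP; exact: inv_continuous.
Qed.

Lemma ler0_pmul_bound (R : realFieldType) (x c : R) : 0 <= c ->
  (forall e, 0 < e -> x <= e * c) -> x <= 0.
Proof.
move=> c0 xle; apply/ler_addgt0Pr => e e0; rewrite add0r.
have c1 : 0 < c + 1 by rewrite ltr_wpDl.
apply: le_trans (xle _ (divr_gt0 e0 c1)) _.
by rewrite mulrAC ler_pdivrMr// ler_pM2l// lerDl.
Qed.

Section cells.
Context {R : realType}.

(* The intervals [z dl, (z+1) dl), z : int, indexed by nat through [pickle]
   (an index that is not a code of an integer gives the empty cell). *)
Definition cell (dl : R) (n : nat) : set R :=
  [set r | pickle (Num.floor (r / dl)) = n].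

Lemma cellE dl n : 0 < dl -> cell dl n =
  if pickle_inv n is Some z then `[z%:~R * dl, (z + 1)%:~R * dl[%classic
  else set0.
Proof.
move=> dl0; apply/seteqP; case nz: (pickle_inv n) => [z|]; split => r //=;
  rewrite ?in_itv /= -?ler_pdivlMr// -?ltr_pdivrMr// -?floor_eq.
- by move=> rn; move: nz; rewrite -rn pickleK_inv => -[/eqP].
- move=> /eqP fz; rewrite /cell /= fz.
  by have := @pickle_invK int n; rewrite nz.
- by move=> rn; move: nz; rewrite -rn pickleK_inv.
Qed.

Lemma measurable_cell dl n : 0 < dl -> measurable (cell dl n).
Proof. by move=> dl0; rewrite cellE//; case: pickle_inv. Qed.

Lemma cell_center dl n : 0 < dl ->
  exists a, forall r, cell dl n r -> `|r - a| <= dl.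
Proof.
move=> dl0; rewrite cellE//; case: pickle_inv => [z|]; last by exists 0.
exists (z%:~R * dl) => r /=.
rewrite in_itv /= intrD mulrDl mul1r => /andP[zr rz].
by rewrite ger0_norm ?subr_ge0// lerBlDl ltW.
Qed.

End cells.

Section integration.
Context {d : measure_display} {T : measurableType d} {R : realType}
  (mu : {measure set T -> \bar R}).
Local Open Scope ereal_scope.

Lemma integral_mul_le_osc (A : set T) (h f : T -> R) (a dl : R) :
  measurable A -> (0 <= dl)%R -> (forall w, A w -> `|h w - a| <= dl)%R ->
  mu.-integrable A (EFin \o f) ->
  mu.-integrable A (EFin \o (fun w => h w * f w)%R) ->
  \int[mu]_(w in A) (f w)%:E = 0 ->
  \int[mu]_(w in A) (h w * f w)%:E <= dl%:E * \int[mu]_(w in A) `|f w|%:E.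
Proof.
move=> mA dl0 hA fi hfi f0.
have afi : mu.-integrable A (fun w => a%:E * (f w)%:E) by exact: integrableZl.
have mf : measurable_fun A f.
  by apply/measurable_EFinP; exact: measurable_int fi.
have -> : \int[mu]_(w in A) (h w * f w)%:E =
    \int[mu]_(w in A) ((h w * f w)%:E - a%:E * (f w)%:E).
  by rewrite integralB// integralZl// f0 mule0 sube0.
apply: le_trans (lee_abs _) _.
apply: le_trans (le_abse_integral _ mA _) _.
  exact: measurable_int (integrableB mA hfi afi).
rewrite -ge0_integralZl_EFin//; last exact/measurableT_comp/measurableT_comp.
apply: ge0_le_integral => //.
- exact/measurableT_comp/measurable_int/(integrableB mA hfi afi).
- by apply/measurable_EFinP/measurable_funM => //; exact/measurableT_comp.
- move=> w Aw /=; rewrite -EFinM lee_fin -mulrBl normrM.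
  by rewrite ler_wpM2r// hA.
Qed.

Lemma integrable_ae_eq (D : set T) (f g : T -> \bar R) : measurable D ->
  measurable_fun D g -> ae_eq mu D f g ->
  mu.-integrable D f -> mu.-integrable D g.
Proof.
move=> mD mg fg /integrableP[mf fi]; apply/integrableP; split => //.
rewrite (ae_eq_integral (fun x => `|f x|)) //; [exact: measurableT_comp..|].
by apply: filterS fg => x + Dx => ->.
Qed.

End integration.

Section condexp.
Context {d : measure_display} {T : measurableType d} {R : realType}
  (P : probability T R) (Gen : set (set T)).
Hypothesis Gen_measurable : Gen `<=` measurable.
Local Notation G := <<s Gen>>.
Local Notation TG := (g_sigma_algebraType Gen).

Lemma gen_measurable : G `<=` measurable.
Proof. by apply: smallest_sub => //; exact: sigma_algebra_measurable. Qed.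

Lemma measurable_wrtE (f : T -> R) :
  measurable_wrt G f <-> measurable_fun [set: TG] f.
Proof.
split=> [mf _ B mB|mf B mB]; first by rewrite setTI; exact: mf.
by have := mf measurableT B mB; rewrite setTI.
Qed.

Lemma measurable_wrt_fun (f : T -> R) :
  measurable_wrt G f -> measurable_fun [set: T] f.
Proof. by move=> mf _ B mB; rewrite setTI; exact: gen_measurable (mf _ mB). Qed.

Lemma measurable_wrt_pos (f : T -> R) :
  measurable_wrt G f -> G [set w | 0 < f w].
Proof.
by move=> mf; rewrite -preimage_itvoy; apply: mf; exact: measurable_itv.
Qed.

Lemma measurable_wrt_indic (b : T -> bool) :
  G [set w | b w] -> measurable_wrt G (fun w => (b w)%:R : R).
Proof.
move=> Gb; apply/measurable_wrtE.
rewrite (_ : (fun w => _) = \1_[set w | b w]); first exact: measurable_indic.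
apply: funext => w; rewrite indicE.
by case: (b w) / boolP => bw;
  [rewrite mem_set | rewrite memNset //; exact/negP].
Qed.

Lemma measurable_wrt_mulVX (g v : T -> R) k :
  measurable_wrt G g -> measurable_wrt G v ->
  measurable_wrt G (fun w => g w / v w ^+ k).
Proof.
move=> /measurable_wrtE mg /measurable_wrtE mv; apply/measurable_wrtE.
exact/measurable_funM/measurable_funV/measurable_funX.
Qed.

Local Open Scope ereal_scope.

Lemma integrable_gen (f : T -> R) (A : set T) : G A ->
  P.-integrable setT (EFin \o f) -> P.-integrable A (EFin \o f).
Proof. by move=> GA; apply: integrableS => //; exact: gen_measurable. Qed.

Lemma is_condexp_self (X : T -> R) : measurable_wrt G X ->
  P.-integrable setT (EFin \o X) -> is_condexp P G X X.
Proof. by move=> mX Xi; split. Qed.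

Lemma is_condexpD (X1 X2 Y1 Y2 : T -> R) :
  is_condexp P G X1 Y1 -> is_condexp P G X2 Y2 ->
  is_condexp P G (fun w => X1 w + X2 w)%R (fun w => Y1 w + Y2 w)%R.
Proof.
move=> [X1i Y1i mY1 E1] [X2i Y2i mY2 E2]; split.
- exact: (integrableD measurableT X1i X2i).
- exact: (integrableD measurableT Y1i Y2i).
- by apply/measurable_wrtE/measurable_funD; exact/measurable_wrtE.
move=> A GA; have mA := gen_measurable GA.
rewrite (integralD mA (integrable_gen GA Y1i) (integrable_gen GA Y2i)).
rewrite E1// E2//.
by rewrite -(integralD mA (integrable_gen GA X1i) (integrable_gen GA X2i)).
Qed.

Lemma is_condexpN (X Y : T -> R) :
  is_condexp P G X Y -> is_condexp P G (fun w => - X w)%R (fun w => - Y w)%R.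
Proof.
move=> [Xi Yi mY E]; split.
- exact: eq_integrable (integrableN Xi).
- exact: eq_integrable (integrableN Yi).
- by apply/measurable_wrtE/measurable_funN; exact/measurable_wrtE.
move=> A GA; have mA := gen_measurable GA.
have intN (Z : T -> R) : P.-integrable setT (EFin \o Z) ->
    \int[P]_(w in A) (- Z w)%:E = - \int[P]_(w in A) (Z w)%:E.
  move=> Zi; rewrite (eq_integral (fun w => (-1)%:E * (Z w)%:E)); last first.
    by move=> w _; rewrite mulN1e.
  by rewrite integralZl ?mulN1e//; exact: integrable_gen.
by rewrite (intN Y)// (intN X)// E.
Qed.

Lemma is_condexpB (X1 X2 Y1 Y2 : T -> R) :
  is_condexp P G X1 Y1 -> is_condexp P G X2 Y2 ->
  is_condexp P G (fun w => X1 w - X2 w)%R (fun w => Y1 w - Y2 w)%R.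
Proof. by move=> c1 /is_condexpN; exact: is_condexpD. Qed.

Lemma is_condexp_center (X Y : T -> R) : is_condexp P G X Y ->
  is_condexp P G (fun w => X w - Y w)%R (fun=> 0%R).
Proof.
move=> cXY; have [_ Yi mY _] := cXY.
have := is_condexpB cXY (is_condexp_self mY Yi).
by under [X in is_condexp _ _ _ X]eq_fun do rewrite subrr.
Qed.

Lemma is_condexp_ae (X X' Y : T -> R) : measurable_fun setT X' ->
  {ae P, forall w, X w = X' w} -> is_condexp P G X Y -> is_condexp P G X' Y.
Proof.
move=> mX' XX' [Xi Yi mY E].
have mX : measurable_fun setT X.
  by apply/measurable_EFinP; exact: measurable_int Xi.
have XX'A A : measurable A -> ae_eq P A (EFin \o X) (EFin \o X').
  by move=> mA; apply: filterS XX' => w /= -> .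
split => //.
  apply: integrable_ae_eq (XX'A _ measurableT) Xi => //.
  exact/measurable_EFinP.
move=> A GA; have mA := gen_measurable GA.
by rewrite E// (ae_eq_integral _ _ mA _ _ (XX'A _ mA)) //;
  apply/measurable_EFinP; exact: measurable_funTS.
Qed.

Section pull_out_sign.
Variables (h f W : T -> R).
Hypotheses (mh : measurable_wrt G h) (cf : is_condexp P G f (fun=> 0%R))
  (cW : is_condexp P G (fun w => h w * f w)%R W).

Lemma integral_pos_pull_out_le (dl : R) : (0 < dl)%R ->
  \int[P]_(w in [set w | 0 < W w]%R) (W w)%:E <=
    dl%:E * \int[P]_(w in setT) `|f w|%:E.
Proof.
move=> dl0; have [fi _ _ Ef] := cf; have [hfi _ mW EW] := cW.
set Pos := [set w | 0 < W w]%R.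
have mPos : measurable Pos := gen_measurable (measurable_wrt_pos mW).
(* [E n] is [Pos `&` h @^-1` cell dl n], in the form of
   [trivIset_preimage1_in]. *)
pose E n := Pos `&` (fun w => pickle (Num.floor (h w / dl))) @^-1` [set n].
have GE n : G (E n).
  apply: (@measurableI _ TG); first exact: measurable_wrt_pos mW.
  exact: mh (measurable_cell n dl0).
have mE n : measurable (E n) := gen_measurable (GE n).
have PosE : Pos = \bigcup_n E n.
  apply/seteqP; split => [w Pw|w [n _ []//]].
  by exists (pickle (Num.floor (h w / dl))).
have mf : measurable_fun setT f.
  by apply/measurable_EFinP; exact: measurable_int fi.
rewrite PosE ge0_integral_bigcup//; last 3 first.
- by apply/measurable_EFinP; apply: measurable_funTS; exact: measurable_wrt_fun.
- by move=> w [n _ [/ltW]]; rewrite lee_fin.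
- exact: trivIset_preimage1_in.
apply: (@le_trans _ _ (\sum_(n <oo) (dl%:E * \int[P]_(w in E n) `|f w|%:E))).
  apply: lee_nneseries => [n _ _|n _].
    by apply: integral_ge0 => w [/ltW]; rewrite lee_fin.
  have [a ha] := cell_center n dl0.
  rewrite EW//; apply: (@integral_mul_le_osc _ _ _ _ _ h f a) => //.
  - exact: ltW.
  - by move=> w [_ /ha].
  - exact: integrable_gen fi.
  - exact: integrable_gen hfi.
  - by rewrite -Ef// integral0.
rewrite nneseriesZl; last by move=> n _; exact: integral_ge0.
rewrite -ge0_integral_bigcup//; last 2 first.
- exact/measurable_funTS/measurableT_comp/measurableT_comp.
- exact: trivIset_preimage1_in.
rewrite -PosE; apply: lee_wpmul2l; first by rewrite lee_fin ltW.
by apply: ge0_subset_integral => //; exact/measurableT_comp/measurableT_comp.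
Qed.

Lemma pull_out_le0 : {ae P, forall w, W w <= 0}%R.
Proof.
have [fi _ _ _] := cf; have [_ Wi mW _] := cW.
set Pos := [set w | 0 < W w]%R.
have mPos : measurable Pos := gen_measurable (measurable_wrt_pos mW).
have intPos_le0 : \int[P]_(w in Pos) (W w)%:E <= 0.
  have Ifin : \int[P]_(w in Pos) (W w)%:E \is a fin_num.
    exact/(integrable_fin_num mPos)/integrableS/Wi.
  set c := \int[P]_(w in setT) `|f w|%:E.
  have cfin : c \is a fin_num by exact: integrable_fin_num (integrable_abse fi).
  rewrite -(fineK Ifin) lee_fin; apply: (ler0_pmul_bound (c := fine c)).
    by apply: fine_ge0; exact: integral_ge0.
  move=> e e0; rewrite -lee_fin EFinM !fineK//; exact: integral_pos_pull_out_le.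
have mWPos : measurable_fun Pos (EFin \o W).
  by apply/measurable_EFinP/measurable_funTS/measurable_wrt_fun.
have absW0 : \int[P]_(w in Pos) `|(W w)%:E| = 0.
  rewrite (eq_integral (fun w => (W w)%:E)); last first.
    by move=> w; rewrite inE /= => W0; rewrite gtr0_norm.
  apply/le_anti; rewrite intPos_le0 integral_ge0// => w /= /ltW.
  by rewrite lee_fin.
apply: filterS ((ae_eq_integral_abs P mPos mWPos).1 absW0) => w W0_of_pos.
rewrite leNgt; apply/negP => W0.
by have /= /eqP := W0_of_pos W0; rewrite gt_eqF.
Qed.

End pull_out_sign.

Lemma pull_out_eq0 (X h f W : T -> R) : measurable_wrt G h ->
  is_condexp P G f (fun=> 0%R) -> (forall w, X w = h w * f w)%R ->
  is_condexp P G X W -> {ae P, forall w, W w = 0%R}.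
Proof.
move=> mh cf /funext -> cW.
have mNh : measurable_wrt G (fun w => - h w)%R.
  by apply/measurable_wrtE/measurable_funN; exact/measurable_wrtE.
have cNW : is_condexp P G (fun w => - h w * f w)%R (fun w => - W w)%R.
  by under eq_fun do rewrite mulNr; exact: is_condexpN.
apply: filterS2 (pull_out_le0 mh cf cW) (pull_out_le0 mNh cf cNW).
by move=> w /= W0; rewrite oppr_le0 => W0'; apply/le_anti/andP.
Qed.

Lemma is_condexp_unique (X Y1 Y2 : T -> R) :
  is_condexp P G X Y1 -> is_condexp P G X Y2 -> {ae P, forall w, Y1 w = Y2 w}.
Proof.
move=> c1 c2.
have c0 : is_condexp P G (fun=> 0%R) (fun=> 0%R).
  apply: is_condexp_self; first exact/measurable_wrtE/measurable_cst.
  exact: eq_integrable (integrable0 P setT).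
have m1 : measurable_wrt G (fun _ : T => 1 : R)%R.
  by apply/measurable_wrtE; exact: measurable_cst.
have XX w : (X w - X w = 1 * 0)%R by rewrite subrr mulr0.
apply: filterS (pull_out_eq0 m1 c0 XX (is_condexpB c1 c2)) => w /eqP.
by rewrite subr_eq0 => /eqP.
Qed.

Lemma is_condvar_center (X m v : T -> R) :
  is_condexp P G X m -> is_condvar P G X v ->
  is_condexp P G (fun w => (X w - m w) ^+ 2 - v w)%R (fun=> 0%R).
Proof.
move=> cX [m' [cX' cV]]; apply: is_condexp_center.
apply: is_condexp_ae cV; last first.
  by apply: filterS (is_condexp_unique cX' cX) => w /= ->.
have [Xi _ mm _] := cX.
apply/measurable_funX/measurable_funB; last exact: measurable_wrt_fun.
by apply/measurable_EFinP; exact: measurable_int Xi.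
Qed.

Lemma is_condexp_add_opp (X1 X2 Y1 Y2 h f : T -> R) : measurable_wrt G h ->
  is_condexp P G f (fun=> 0%R) -> (forall w, X1 w + X2 w = h w * f w)%R ->
  is_condexp P G X1 Y1 -> is_condexp P G X2 Y2 ->
  {ae P, forall w, Y1 w = - Y2 w}%R.
Proof.
move=> mh cf hf c1 c2.
apply: filterS (pull_out_eq0 mh cf hf (is_condexpD c1 c2)) => w /eqP.
by rewrite addr_eq0 => /eqP.
Qed.

End condexp.

Section censoring.
Context {d : measure_display} {T : measurableType d} {R : realType}
  {dX : measure_display} {X : measurableType dX}
  (S : nat -> nat -> T -> R) (C : nat -> T -> R) (x : nat -> nat -> T -> X).
Hypotheses (HSm : forall i j, measurable_fun setT (S i j))
  (HCm : forall i, measurable_fun setT (C i))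
  (Hxm : forall i j, measurable_fun setT (x i j))
  (HS0 : forall i w, S i 0 w = 0)
  (HSinc : forall i j w, S i j w < S i j.+1 w)
  (HCpos : forall i w, 0 < C i w).

Definition Gsig_gen i n : set (set T) :=
  [set A | Fsig S x i n A \/ exists k, (1 <= k <= n)%N /\
    (A = [set w | S i k w <= C i w] \/ A = [set w | S i k w = C i w])].

Lemma GsigE i n : Gsig S C x i n = <<s Gsig_gen i n >>.
Proof. by []. Qed.

Lemma Fsig_measurable i n : Fsig S x i n `<=` measurable.
Proof.
apply: smallest_sub; first exact: sigma_algebra_measurable.
move=> A [[l [_ [B [mB ->]]]]|[l [_ [B [mB ->]]]]].
- by have := HSm i l measurableT mB; rewrite setTI.
- by have := Hxm i l measurableT mB; rewrite setTI.
Qed.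

Lemma Gsig_gen_measurable i n : Gsig_gen i n `<=` measurable.
Proof.
move=> A [/Fsig_measurable//|[k [_ [->|->]]]].
- have := measurable_fun_ler (HSm i k) (HCm i) measurableT (Y := [set true]) I.
  by rewrite setTI.
- rewrite (_ : [set w | _] = (fun w => S i k w == C i w) @^-1` [set true]).
    have := measurable_fun_eqr (HSm i k) (HCm i) measurableT
      (Y := [set true]) I.
    by rewrite setTI.
  by apply/seteqP; split => w /= /eqP.
Qed.

Lemma measurable_wrt_Fsig_Gsig i n (f : T -> R) :
  measurable_wrt (Fsig S x i n) f -> measurable_wrt (Gsig S C x i n) f.
Proof. by move=> mf B mB; apply: sub_gen_smallest; left; exact: mf. Qed.

Lemma Gsig_lt i n : Gsig S C x i n [set w | S i n w < C i w].
Proof.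
case: n => [|n].
  rewrite (_ : [set w | _] = setT).
    exact: (@measurableT _ (g_sigma_algebraType _)).
  by apply/seteqP; split => w // _; rewrite /= HS0 HCpos.
rewrite (_ : [set w | _] =
    [set w | S i n.+1 w <= C i w] `\` [set w | S i n.+1 w = C i w]).
  apply: (@measurableD _ (g_sigma_algebraType _)); apply: sub_gen_smallest;
    right; exists n.+1; (split; first by rewrite leqnn); [left | right] => //.
apply/seteqP; split => w /=; rewrite lt_neqAle; first by move=> /andP[/eqP].
by move=> [-> /eqP ->].
Qed.

Lemma Icen_add_Iobs i n w :
  Icen S C i n.+1 w + Iobs S C i n.+1 w = ((S i n w < C i w)%R : bool)%:R.
Proof.
rewrite /Icen /Iobs /= leNgt.
case: ltrP => [Sn_lt|C_le]; case: ltrP => //= [_|C_ge]; rewrite ?addr0 ?add0r//.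
by have := lt_le_trans (HSinc i n w) (le_trans C_ge C_le); rewrite ltxx.
Qed.

Lemma condexp_cen_obs_opp (P : probability T R) i n
    (g f Xcen Xobs Ycen Yobs : T -> R) :
  measurable_wrt (Gsig S C x i n) g ->
  is_condexp P (Gsig S C x i n) f (fun=> 0) ->
  (forall w, Xcen w = g w * f w * Icen S C i n.+1 w) ->
  (forall w, Xobs w = g w * f w * Iobs S C i n.+1 w) ->
  is_condexp P (Gsig S C x i n) Xcen Ycen ->
  is_condexp P (Gsig S C x i n) Xobs Yobs ->
  {ae P, forall w, Ycen w = - Yobs w}.
Proof.
rewrite GsigE => mg cf Xc Xo.
have mh : measurable_wrt <<s Gsig_gen i n >>
    (fun w => g w * ((S i n w < C i w)%R : bool)%:R).
  apply/measurable_wrtE/measurable_funM; first exact/measurable_wrtE.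
  by apply/measurable_wrtE; apply: measurable_wrt_indic; exact: Gsig_lt.
apply: (is_condexp_add_opp (@Gsig_gen_measurable i n) mh cf) => w.
by rewrite Xc Xo -mulrDr Icen_add_Iobs mulrAC.
Qed.

End censoring.

Theorem lemma2p1
  (R : realType) (d : measure_display) (T : measurableType d)
  (dX : measure_display) (X : measurableType dX) (p : nat)
  (K : set ('rV[R]_p * R))
  (P : 'rV[R]_p * R -> probability T R)
  (S : nat -> nat -> T -> R) (C : nat -> T -> R) (x : nat -> nat -> T -> X)
  (mu V : nat -> nat -> 'rV[R]_p -> T -> R)
  (g : nat -> nat -> 'rV[R]_p * R -> T -> R)
  (* event times, censoring, covariates are random variables *)
  (HSm : forall i j, measurable_fun setT (S i j))
  (HCm : forall i, measurable_fun setT (C i))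
  (Hxm : forall i j, measurable_fun setT (x i j))
  (* 0 = S_i0 < S_i1 < ... ; 0 < C_i *)
  (HS0 : forall i w, S i 0 w = 0)
  (HSinc : forall i j w, S i j w < S i j.+1 w)
  (HCpos : forall i w, 0 < C i w)
  (* mu_ij(theta), V_ij(theta) > 0 are F_{i,j-1}-measurable *)
  (Hmum : forall i j th, (1 <= i)%N -> (1 <= j)%N ->
     measurable_wrt (Fsig S x i j.-1) (mu i j th))
  (HVm : forall i j th, (1 <= i)%N -> (1 <= j)%N ->
     measurable_wrt (Fsig S x i j.-1) (V i j th))
  (HVpos : forall i j th w, (1 <= i)%N -> (1 <= j)%N -> 0 < V i j th w)
  (* gap times have finite second moments *)
  (HY2 : forall i j eta, K eta -> (1 <= i)%N -> (1 <= j)%N ->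
     (P eta).-integrable setT (EFin \o (fun w => S i j w - S i j.-1 w)) /\
     (P eta).-integrable setT (EFin \o (fun w => (S i j w - S i j.-1 w) ^+ 2)))
  (* conditional mean and variance given F_{i,j-1} *)
  (HmeanF : forall i j eta, K eta -> (1 <= i)%N -> (1 <= j)%N ->
     is_condexp (P eta) (Fsig S x i j.-1) (fun w => S i j w - S i j.-1 w)
       (mu i j eta.1))
  (HvarF : forall i j eta, K eta -> (1 <= i)%N -> (1 <= j)%N ->
     is_condvar (P eta) (Fsig S x i j.-1) (fun w => S i j w - S i j.-1 w)
       (fun w => eta.2 * V i j eta.1 w ^+ 2))
  (* assumption (A): same conditional mean and variance given G_{i,j-1} *)
  (HmeanG : forall i j eta, K eta -> (1 <= i)%N -> (1 <= j)%N ->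
     is_condexp (P eta) (Gsig S C x i j.-1) (fun w => S i j w - S i j.-1 w)
       (mu i j eta.1))
  (HvarG : forall i j eta, K eta -> (1 <= i)%N -> (1 <= j)%N ->
     is_condvar (P eta) (Gsig S C x i j.-1) (fun w => S i j w - S i j.-1 w)
       (fun w => eta.2 * V i j eta.1 w ^+ 2))
  (* g_ij(eta) is G_{i,j-1}-measurable *)
  (Hgm : forall i j eta, K eta -> (1 <= i)%N -> (1 <= j)%N ->
     measurable_wrt (Gsig S C x i j.-1) (g i j eta)) :
  forall eta i j, K eta -> (1 <= i)%N -> (1 <= j)%N ->
  let Z := fun w => (S i j w - S i j.-1 w - mu i j eta.1 w) / V i j eta.1 w in
  let G := Gsig S C x i j.-1 in
  (forall Ycen Yobs : T -> R,
     is_condexp (P eta) G (fun w => g i j eta w * Z w * Icen S C i j w) Ycen ->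
     is_condexp (P eta) G (fun w => g i j eta w * Z w * Iobs S C i j w) Yobs ->
     {ae P eta, forall w, Ycen w = - Yobs w}) /\
  (forall Ycen Yobs : T -> R,
     is_condexp (P eta) G
       (fun w => g i j eta w * (Z w ^+ 2 - eta.2) * Icen S C i j w) Ycen ->
     is_condexp (P eta) G
       (fun w => g i j eta w * (Z w ^+ 2 - eta.2) * Iobs S C i j w) Yobs ->
     {ae P eta, forall w, Ycen w = - Yobs w}).
Proof.
move=> eta i [//|n] Keta i1 _ Z G; rewrite {}/G /=.
have mgen := Gsig_gen_measurable HSm HCm Hxm (i := i) (n := n).
have cY := HmeanG i n.+1 eta Keta i1 isT.
have cV := HvarG i n.+1 eta Keta i1 isT.
have mg := Hgm i n.+1 eta Keta i1 isT.
have mV := measurable_wrt_Fsig_Gsig (C := C) (HVm i n.+1 eta.1 i1 isT).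
have V0 w : V i n.+1 eta.1 w != 0 by rewrite gt_eqF// HVpos.
have mgV k := measurable_wrt_mulVX k mg mV.
split=> Ycen Yobs.
- apply: (condexp_cen_obs_opp HSm HCm Hxm HS0 HSinc HCpos (mgV 1%N)
    (is_condexp_center mgen cY)) => w; rewrite /Z /=; field; exact: V0.
- apply: (condexp_cen_obs_opp HSm HCm Hxm HS0 HSinc HCpos (mgV 2%N)
    (is_condvar_center mgen cY cV)) => w; rewrite /Z /=; field; exact: V0.
Qed.
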